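(* Let $G$ be a finite abelian group with dual group $\widehat G$, and let $F=(F(s,\sigma))_{s\in G,\sigma\in\widehat G}$ be its Fourier matrix, a unitary matrix whose columns $F(\cdot,\sigma)$ are the normalized characters, so that $|F(s,\sigma)|^2=1/|G|$ for all $s,\sigma$. Let $S\subseteq G$ and $\Sigma\subseteq\widehat G$ be symmetric subsets ($S=-S$, $\Sigma=\Sigma^{-1}$) with $|S|\ge|\Sigma|$. Let $P$ be the orthogonal projection of $\ell^2(G)$ onto $\mathrm{span}\{F(\cdot,\sigma):\sigma\in\Sigma\}$ and let $(Qf)(s)=\mathbbm{1}_S(s)f(s)$. Suppose $\mu_1\ge\mu_2\ge\cdots\ge\mu_{|\Sigma|}$ are the nonzero eigenvalues of $PQ$, with corresponding orthonormal eigenvectors $\varphi_1,\dots,\varphi_{|\Sigma|}$. Then for every $\sigma\in\widehat G$, $\sum_{\nu=1}^{|\Sigma|}\mu_\nu|F\varphi_\nu(\sigma)|^2=\frac{|S|}{|G|}\mathbbm{1}_\Sigma(\sigma),$ where $F\varphi(\sigma)=\sum_{s\in G}\varphi(s)\overline{F(s,\sigma)}$.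
   Context: $\ell^2(G)$ is the space of complex functions on $G$ with the standard inner product. $\mathbbm{1}_A$ denotes the indicator function of a set $A$. *)

From HB Require Import structures.
From mathcomp Require Export all_boot all_order all_algebra all_fingroup all_solvable all_field all_character.
Set Implicit Arguments. Unset Strict Implicit. Unset Printing Implicit Defensive.
Export Order.TTheory GRing.Theory Num.Theory.
Local Open Scope ring_scope.

(* The finite abelian group G is the whole finGroupType gT (written
   multiplicatively), with abelian [set: gT].  Its dual group is indexed by
   Iirr [set: gT]: for an abelian group the irreducible characters are exactly
   the homomorphisms G -> C^x. *)

Definition fourier (gT : finGroupType) (s : gT) (i : Iirr [set: gT]) : algC :=
  'chi[[set: gT]]_i s / sqrtC (#|gT|%:R).

Definition l2dot (gT : finGroupType) (f g : gT -> algC) : algC :=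
  \sum_(s : gT) f s * (g s)^*.

Definition fourierT (gT : finGroupType) (f : gT -> algC) (i : Iirr [set: gT]) : algC :=
  \sum_(s : gT) f s * (fourier s i)^*.

Definition mulInd (gT : finGroupType) (S : {set gT}) (f : gT -> algC) : gT -> algC :=
  fun s => if s \in S then f s else 0.

Definition is_orth_proj_span (gT : finGroupType) (Sigma : {set Iirr [set: gT]})
    (P : (gT -> algC) -> (gT -> algC)) : Prop :=
  forall f : gT -> algC,
    (exists c : Iirr [set: gT] -> algC,
        forall s, P f s = \sum_(i in Sigma) c i * fourier s i)
    /\ (forall i, i \in Sigma -> l2dot (fun s => f s - P f s) (fun s => fourier s i) = 0).


(* Each phi_nu is an eigenvector of PQ for a nonzero eigenvalue, so it lies in
   the range of P, the |Sigma|-dimensional span of the F(., i), i in Sigma.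
   Being |Sigma| orthonormal vectors there, the phi_nu form an orthonormal
   basis of that span (a square matrix with orthonormal rows has orthonormal
   columns), so F(., sigma) = sum_nu conj(F phi_nu(sigma)) phi_nu for sigma in
   Sigma.  As f - Pf is orthogonal to F(., sigma) and Q is self-adjoint,
   mu_nu F phi_nu(sigma) = <phi_nu, Q F(., sigma)>, and the sum collapses to
   <F(., sigma), Q F(., sigma)> = sum_(s in S) |F(s, sigma)|^2 = |S| / |G|.
   For sigma outside Sigma every F phi_nu(sigma) vanishes. *)

Set Implicit Arguments.
Unset Strict Implicit.
Unset Printing Implicit Defensive.
Local Open Scope ring_scope.

Lemma mulmx1C_sum (R : comPzRingType) (J : finType) (A : {set J})
    (a b : 'I_#|A| -> J -> R) :
  (forall k l, \sum_(j in A) a k j * b l j = (k == l)%:R) ->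
  forall i j, i \in A -> j \in A -> \sum_k b k i * a k j = (i == j)%:R.
Proof.
move=> ab1 i j Ai Aj.
pose M : 'M[R]_#|A| := \matrix_(k, m) a k (enum_val m).
pose N : 'M[R]_#|A| := \matrix_(m, l) b l (enum_val m).
have MN1 : M *m N = 1%:M.
  apply/matrixP => k l; rewrite !mxE -ab1 [RHS]big_enum_val.
  by apply: eq_bigr => m _; rewrite !mxE.
pose m := enum_rank_in Ai i; pose m' := enum_rank_in Ai j.
have [<- <-] : enum_val m = i /\ enum_val m' = j.
  by split; apply: enum_rankK_in.
have := congr1 (fun B : 'M[R]_#|A| => B m m') (mulmx1C MN1).
rewrite /= !mxE (inj_eq enum_val_inj) => <-.
by apply: eq_bigr => k _; rewrite !mxE.
Qed.

Lemma sum_delta_mull (R : pzSemiRingType) (I : finType) (A : {pred I})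
    (F : I -> R) j :
  \sum_(i in A) (i == j)%:R * F i = (j \in A)%:R * F j.
Proof.
case: (boolP (j \in A)) => Aj.
  rewrite (bigD1 j) //= eqxx mul1r big1 ?addr0 // => i /andP [_ /negbTE ->].
  by rewrite mul0r.
rewrite mul0r big1 // => i Ai.
by rewrite (_ : i == j = false) ?mul0r //; apply: contraNF Aj => /eqP <-.
Qed.

Section L2.
Variable gT : finGroupType.
Implicit Types (f g : gT -> algC) (S : {set gT}).

Lemma eq_l2dotl f f' g : f =1 f' -> l2dot f g = l2dot f' g.
Proof. by move=> eqf; apply: eq_bigr => s _; rewrite eqf. Qed.

Lemma l2dotC f g : l2dot g f = (l2dot f g)^*.
Proof.
rewrite /l2dot rmorph_sum /=; apply: eq_bigr => s _.
by rewrite rmorphM /= conjCK mulrC.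
Qed.

Lemma l2dotZl a f g : l2dot (fun s => a * f s) g = a * l2dot f g.
Proof. by rewrite /l2dot mulr_sumr; apply: eq_bigr => s _; rewrite mulrA. Qed.

Lemma l2dotBl f f' g : l2dot (fun s => f s - f' s) g = l2dot f g - l2dot f' g.
Proof. by rewrite /l2dot -sumrB; apply: eq_bigr => s _; rewrite mulrBl. Qed.

Lemma l2dot_suml (I : Type) (r : seq I) (P : pred I) (a : I -> algC)
    (F : I -> gT -> algC) g :
  l2dot (fun s => \sum_(k <- r | P k) a k * F k s) g
    = \sum_(k <- r | P k) a k * l2dot (F k) g.
Proof.
rewrite /l2dot; under eq_bigr do rewrite mulr_suml.
by rewrite exchange_big; apply: eq_bigr => k _; rewrite mulr_sumr;
  apply: eq_bigr => s _; rewrite mulrA.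
Qed.

Lemma l2dot_mulInd S f g : l2dot (mulInd S f) g = l2dot f (mulInd S g).
Proof.
apply: eq_bigr => s _; rewrite /mulInd.
by case: ifP => _; rewrite ?conjC0 ?mul0r ?mulr0.
Qed.

End L2.

Section Fourier.
Variable gT : finGroupType.
Implicit Types (i j : Iirr [set: gT]) (S : {set gT}).

Lemma conj_sqrtC_card : (sqrtC (#|gT|%:R : algC))^* = sqrtC #|gT|%:R.
Proof. by apply: conj_Creal; apply: ger0_real; rewrite sqrtC_ge0 ler0n. Qed.

Lemma fourier_mul_conj (s : gT) i j :
  fourier s i * (fourier s j)^* =
    'chi[[set: gT]]_i s * ('chi[[set: gT]]_j s)^* / #|gT|%:R.
Proof.
rewrite /fourier rmorphM /= fmorphV /= conj_sqrtC_card.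
by rewrite mulrACA -invfM -expr2 sqrtCK.
Qed.

Lemma l2dot_fourier i j :
  l2dot (fun s => fourier s i) (fun s => fourier s j) = (i == j)%:R.
Proof.
rewrite /l2dot; under eq_bigr do rewrite fourier_mul_conj.
rewrite -mulr_suml -(cfdot_irr i j) cfdotE cardsT mulrC.
by congr (_ * _); apply: eq_bigl => x; rewrite in_setT.
Qed.

Lemma abelian_fourier_mul_conj (s : gT) i : abelian [set: gT] ->
  fourier s i * (fourier s i)^* = #|gT|%:R^-1.
Proof.
move=> /char_abelianP abG.
by rewrite fourier_mul_conj -normCK normC_lin_char ?in_setT // expr1n mul1r.
Qed.

Lemma l2dot_fourier_mulInd S i : abelian [set: gT] ->
  l2dot (fun s => fourier s i) (mulInd S (fun s => fourier s i))
    = #|S|%:R / #|gT|%:R.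
Proof.
move=> abG; rewrite /l2dot (bigID (mem S)) /= [X in _ + X]big1 ?addr0.
  rewrite /mulInd; under eq_bigr => s -> do rewrite abelian_fourier_mul_conj //.
  by rewrite sumr_const mulr_natl.
by move=> s /negbTE notSs; rewrite /mulInd notSs conjC0 mulr0.
Qed.

Lemma l2dot_span_fourier (A : {set Iirr [set: gT]})
    (d : Iirr [set: gT] -> algC) j :
  l2dot (fun s => \sum_(i in A) d i * fourier s i) (fun s => fourier s j)
    = (j \in A)%:R * d j.
Proof.
by rewrite l2dot_suml; under eq_bigr do rewrite l2dot_fourier mulrC;
  rewrite sum_delta_mull.
Qed.

End Fourier.

Section OrthProj.
Variables (gT : finGroupType) (Sigma : {set Iirr [set: gT]}).
Variable P : (gT -> algC) -> (gT -> algC).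
Hypothesis projP : is_orth_proj_span Sigma P.

Lemma orth_proj_eigvec_span (g f : gT -> algC) (mu : algC) :
  mu != 0 -> (forall s, P g s = mu * f s) ->
  exists c : Iirr [set: gT] -> algC,
    forall s, f s = \sum_(i in Sigma) c i * fourier s i.
Proof.
move=> mu_neq0 Pg; have [[c Pc] _] := projP g.
exists (fun i => mu^-1 * c i) => s.
rewrite -[f s](mulKf mu_neq0) -Pg Pc mulr_sumr.
by under eq_bigr do rewrite mulrA.
Qed.

Lemma l2dot_orth_proj_fourier (f : gT -> algC) j : j \in Sigma ->
  l2dot (P f) (fun s => fourier s j) = l2dot f (fun s => fourier s j).
Proof.
move=> Sj; have [_ /(_ j Sj)] := projP f.
by rewrite l2dotBl => /eqP; rewrite subr_eq0 => /eqP.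
Qed.

Lemma orth_proj_eigvec_fourierT (S : {set gT}) (f : gT -> algC) mu j :
  (forall s, P (mulInd S f) s = mu * f s) -> j \in Sigma ->
  mu * fourierT f j = l2dot f (mulInd S (fun s => fourier s j)).
Proof.
move=> eigf Sj; rewrite -l2dot_mulInd -l2dot_orth_proj_fourier //.
by rewrite -l2dotZl; apply: eq_l2dotl => s; rewrite eigf.
Qed.

End OrthProj.

Section OrthonormalBasis.
Variables (gT : finGroupType) (Sigma : {set Iirr [set: gT]}).
Variable phi : 'I_#|Sigma| -> gT -> algC.
Variable c : 'I_#|Sigma| -> Iirr [set: gT] -> algC.
Hypothesis phi_span :
  forall nu s, phi nu s = \sum_(i in Sigma) c nu i * fourier s i.
Hypothesis phi_orthonormal :
  forall nu nu', l2dot (phi nu) (phi nu') = (nu == nu')%:R.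

Lemma fourierT_span nu j : fourierT (phi nu) j = (j \in Sigma)%:R * c nu j.
Proof. by rewrite -l2dot_span_fourier; apply: eq_l2dotl. Qed.

Lemma span_coef_orthonormal nu nu' :
  \sum_(i in Sigma) c nu i * (c nu' i)^* = (nu == nu')%:R.
Proof.
rewrite -phi_orthonormal (eq_l2dotl _ (phi_span nu)) l2dot_suml.
apply: eq_bigr => i Si; congr (_ * _).
by rewrite l2dotC -[l2dot _ _]/(fourierT _ _) fourierT_span Si mul1r.
Qed.

Lemma fourier_expansion sigma : sigma \in Sigma -> forall s,
  fourier s sigma = \sum_nu (fourierT (phi nu) sigma)^* * phi nu s.
Proof.
move=> Ssigma s.
under eq_bigr do rewrite fourierT_span Ssigma mul1r phi_span mulr_sumr.
rewrite exchange_big /=.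
under eq_bigr => i Si.
  under eq_bigr do rewrite mulrA.
  rewrite -mulr_suml (mulmx1C_sum span_coef_orthonormal) // eq_sym.
  over.
by rewrite sum_delta_mull Ssigma mul1r.
Qed.

End OrthonormalBasis.

Theorem proposition1 (gT : finGroupType) (S : {set gT}) (Sigma : {set Iirr [set: gT]})
    (P : (gT -> algC) -> (gT -> algC))
    (mu : 'I_#|Sigma| -> algC) (phi : 'I_#|Sigma| -> gT -> algC) :
  abelian [set: gT] ->
  (forall x, x \in S -> (x^-1)%g \in S) ->
  (forall i, i \in Sigma ->
     exists2 j, j \in Sigma & forall x, 'chi[[set: gT]]_j x = ('chi[[set: gT]]_i x)^-1) ->
  (#|Sigma| <= #|S|)%N ->
  is_orth_proj_span Sigma P ->
  (forall i j : 'I_#|Sigma|, (i <= j)%N -> mu j <= mu i) ->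
  (forall i, mu i != 0) ->
  (forall i s, P (mulInd S (phi i)) s = mu i * phi i s) ->
  (forall i j, l2dot (phi i) (phi j) = (i == j)%:R) ->
  (forall (lam : algC) (f : gT -> algC), lam != 0 -> (exists s, f s != 0) ->
     (forall s, P (mulInd S f) s = lam * f s) -> exists i, lam = mu i) ->
  forall sigma : Iirr [set: gT],
    \sum_(nu < #|Sigma|) mu nu * `|fourierT (phi nu) sigma| ^+ 2
      = #|S|%:R / #|gT|%:R * (sigma \in Sigma)%:R.
Proof.
move=> abG _ _ _ projP _ mu_neq0 eig_phi phi_orthonormal _ sigma.
have [c phi_span] := fin_all_exists (fun nu =>
  orth_proj_eigvec_span projP (mu_neq0 nu) (eig_phi nu)).
have [Ssigma | notSsigma] := boolP (sigma \in Sigma); last first.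
  rewrite mulr0 big1 // => nu _.
  rewrite (fourierT_span phi_span) (negbTE notSsigma) mul0r.
  by rewrite normr0 expr0n mulr0.
rewrite mulr1 -(l2dot_fourier_mulInd S sigma abG).
have expand_sigma := fourier_expansion phi_span phi_orthonormal Ssigma.
rewrite (eq_l2dotl _ expand_sigma) l2dot_suml.
apply: eq_bigr => nu _.
rewrite -(orth_proj_eigvec_fourierT projP (eig_phi nu) Ssigma).
by rewrite normCKC mulrCA.
Qed.
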